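(* Let $n\ge 2$, and let $S$ be a semitransitive subsemigroup of $\mathcal{I}_n\setminus\mathcal{S}_n$ with $|S|\le 2n$, with non-zero idempotents $g,h$ and transitivity blocks $X_1,\dots,X_m$. Let $t=\min_{1\le i\le m}|X_i|$ and $N=(gSh\cup hSg)\setminus\{0\}$. Then $|N|\ge n-t$.
   Context: $\mathcal{I}_n$ denotes the symmetric inverse semigroup of all partial injective maps of $X=\{1,\dots,n\}$ to itself, with maps written on the right and composed left to right; $0$ denotes the empty map. $\mathcal{S}_n$ is the symmetric group on $X$. A semigroup $S$ of partial transformations of $X$ is semitransitive if for all $x,y\in X$ there is $\varphi\in S$ with $x\varphi=y$ or $y\varphi=x$. It is known that such an $S$ (semitransitive in $\mathcal{I}_n\setminus\mathcal{S}_n$, $|S|\le 2n$) has exactly two non-zero idempotents $g,h$, with disjoint domains whose union is $X$. For $x,y\in X$ write $x\ge y$ if $x\varphi=y$ for some $\varphi\in S$; this is a total preorder, and its equivalence classes are the transitivity blocks $X_1,\dots,X_m$, numbered so that for $x\in X_i$, $y\in X_j$ one has $x\ge y$ iff $i\le j$. $gSh=\{g\sigma h:\sigma\in S\}$, and similarly $hSg$. *)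

From mathcomp Require Import all_boot.
Set Implicit Arguments. Unset Strict Implicit. Unset Printing Implicit Defensive.

(* Partial transformations of X = 'I_n (standing for {1,...,n}):
   f x = Some y means x f = y; f x = None means x is not in dom f. *)
Definition ptrans (n : nat) := {ffun 'I_n -> option 'I_n}.

Definition pinjb n (f : ptrans n) : bool :=
  [forall x, forall y, (f x != None) && (f x == f y) ==> (x == y)].

(* composition, maps written on the right: x (f;g) = (x f) g *)
Definition pcomp n (f g : ptrans n) : ptrans n := [ffun x => obind g (f x)].

Definition pzero n : ptrans n := [ffun => None].

Definition is_permb n (f : ptrans n) : bool := pinjb f && [forall x, f x != None].

Definition idempotentb n (f : ptrans n) : bool := pcomp f f == f.

Definition subsemigroup_In_minus_Sn n (S : {set ptrans n}) : Prop :=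
  (forall f, f \in S -> pinjb f && ~~ is_permb f) /\
  (forall f g, f \in S -> g \in S -> pcomp f g \in S).

Definition semitransitive n (S : {set ptrans n}) : Prop :=
  forall x y : 'I_n, exists2 f, f \in S & (f x = Some y \/ f y = Some x).

Definition reachb n (S : {set ptrans n}) (x y : 'I_n) : bool :=
  [exists f in S, f x == Some y].

Definition tblock n (S : {set ptrans n}) (x : 'I_n) : {set 'I_n} :=
  [set y | reachb S x y && reachb S y x].

Definition sandwich n (S : {set ptrans n}) (a b : ptrans n) : {set ptrans n} :=
  [set pcomp (pcomp a s) b | s in S].

(* Write x >= y when some map of S sends x to y; this total preorder has the
   transitivity blocks as classes.  First, g and h are partial identities on two
   complementary "sides" of X (FromHypotheses), and every map of S fixing a point
   has a power equal to the idempotent of that point's side.  Hence a map of S that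
   does not move some point strictly down moves no point of that side strictly down
   (dichotomy), which yields "drop maps": for x in a convex set W and a lowest
   point p of a side, a map sending x to p and everything of W strictly below x
   out of W.  Framing drop maps by g and h produces elements of N = gSh u hSg.

   For convex W let N_W be the nonzero restrictions to W of the maps of N.
   Removing the top block of a two-sided W costs at least |top W| elements of N_W
   (peel_top and variants); inverting all maps reverses the preorder, which gives
   the bottom-block versions for free (Inversion).  An induction peeling top or
   bottom blocks while keeping a block K shows |W| <= |N_W| + |K| for every convex
   W containing K that is K or two-sided (block_bound); W = X and |K| = t give the
   theorem. *)

From Pilot Require Import Defs.
From mathcomp Require Import all_boot zify.
Import Defs.
Set Implicit Arguments. Unset Strict Implicit. Unset Printing Implicit Defensive.

Section PartialMaps.
Variable n : nat.
Implicit Types (f k l : ptrans n) (x y z : 'I_n) (W : {set 'I_n}).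

Lemma pcompE f k x : pcomp f k x = obind k (f x).
Proof. by rewrite ffunE. Qed.

Lemma pcompA f k l : pcomp f (pcomp k l) = pcomp (pcomp f k) l.
Proof. by apply/ffunP=> x; rewrite !pcompE; case: (f x) => //= y; rewrite pcompE. Qed.

Definition pinj f := forall x y z, f x = Some z -> f y = Some z -> x = y.

Lemma pinjP f : reflect (pinj f) (pinjb f).
Proof.
apply: (iffP forallP) => H.
  move=> x y z fx fy; have /forallP/(_ y) := H x.
  by rewrite fx fy eqxx /= => /eqP.
move=> x; apply/forallP=> y; apply/implyP=> /andP[].
by case E: (f x) => [z|] // _ /eqP E2; apply/eqP; exact: H E (esym E2).
Qed.

Lemma pinj_comp f k : pinj f -> pinj k -> pinj (pcomp f k).
Proof.
move=> If Ik x y z; rewrite !pcompE.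
case Ex: (f x) => [a|] //= Ka; case Ey: (f y) => [b|] //= Kb.
by have ab := Ik _ _ _ Ka Kb; subst b; exact: If Ex Ey.
Qed.

Lemma idem_pid f : pinj f -> pcomp f f = f -> forall x y, f x = Some y -> y = x.
Proof.
move=> If ff x y fxy; apply: If (fxy).
by have := congr1 (fun k : ptrans n => k x) ff; rewrite pcompE fxy.
Qed.

Lemma pinj_pid f : (forall x y, f x = Some y -> y = x) -> pinj f.
Proof. by move=> fid x y z /fid <- /fid <-. Qed.

(* ppow f m is the (m+1)-st power of f. *)
Definition ppow f m := iter m (pcomp f) f.

Lemma ppowS f m : ppow f m.+1 = pcomp f (ppow f m). Proof. by []. Qed.

Lemma ppowD f a b : pcomp (ppow f a) (ppow f b) = ppow f (a + b).+1.
Proof. by elim: a => [|a IH] //; rewrite ppowS -pcompA IH. Qed.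

Lemma ppow_fix f x m : f x = Some x -> ppow f m x = Some x.
Proof. by move=> fx; elim: m => [|m IH] //=; rewrite pcompE fx. Qed.

(* If two powers coincide, the powers are eventually periodic, and the power
   whose exponent is a multiple of the period beyond the preperiod is idempotent. *)
Lemma ppow_period f i j : i < j -> ppow f i = ppow f j ->
  exists m, pcomp (ppow f m) (ppow f m) = ppow f m.
Proof.
move=> lij Eij; set p := j - i; set M := p * i.+1.
have shift d : ppow f (i + d) = ppow f (j + d).
  by elim: d => [|d IH]; rewrite ?addn0 // !addnS !ppowS IH.
have period q d : ppow f (i + d + p * q) = ppow f (i + d).
  elim: q => [|q IH]; first by rewrite muln0 addn0.
  have -> : i + d + p * q.+1 = j + (d + p * q) by rewrite /p; lia.
  by rewrite -shift addnA IH.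
have iM : i < M by rewrite /M leq_pmull // subn_gt0.
exists M.-1; rewrite ppowD.
have -> : (M.-1 + M.-1).+1 = i + (M.-1 - i) + p * i.+1 by rewrite /M; lia.
by rewrite period; congr ppow; lia.
Qed.

Lemma ppow_idem f : exists m, pcomp (ppow f m) (ppow f m) = ppow f m.
Proof.
pose F (i : 'I_(#|{: ptrans n}|.+1)) := ppow f i.
have /injectivePn [i [j nij Eij]] : ~~ injectiveb F.
  by apply/injectiveP => /leq_card; rewrite card_ord ltnn.
case: (ltngtP i j) => [lt|gt|/val_inj eq]; last by rewrite eq eqxx in nij.
  exact: ppow_period lt Eij.
exact: ppow_period gt (esym Eij).
Qed.

Definition restrict W f : ptrans n :=
  [ffun x => if x \in W then obind (fun y => if y \in W then Some y else None) (f x)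
             else None].

Lemma restrictE W f x : restrict W f x =
  if x \in W then obind (fun y => if y \in W then Some y else None) (f x) else None.
Proof. by rewrite ffunE. Qed.

Lemma restrictS W f x y : restrict W f x = Some y -> [/\ x \in W, y \in W & f x = Some y].
Proof.
rewrite restrictE; case: (x \in W) => //; case: (f x) => [z|] //=.
by case: ifP => // zW [<-].
Qed.

Lemma restrict_inj W f : pinj f -> pinj (restrict W f).
Proof. by move=> If x y z /restrictS[_ _ E1] /restrictS[_ _ E2]; exact: If E1 E2. Qed.

Lemma restrict_sub W W' f : W' \subset W -> restrict W' (restrict W f) = restrict W' f.
Proof.
move=> sub; apply/ffunP => x; rewrite !restrictE.
case xW': (x \in W') => //; rewrite (subsetP sub _ xW').
case: (f x) => [y|] //=; case yW': (y \in W'); first by rewrite (subsetP sub _ yW') /= yW'.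
by case: (y \in W); rewrite /= ?yW'.
Qed.

Lemma restrictT f : restrict setT f = f.
Proof. by apply/ffunP => x; rewrite restrictE in_setT; case: (f x) => //= y; rewrite in_setT. Qed.

Lemma restrict0 W : restrict W (pzero n) = pzero n.
Proof. by apply/ffunP => x; rewrite restrictE !ffunE; case: (x \in W). Qed.

Lemma ptrans_nz f : f != pzero n -> exists x, f x != None.
Proof.
move=> nz; apply/existsP; apply: contraR nz => /existsPn fN.
by apply/eqP/ffunP => x; rewrite ffunE; move/negPn/eqP: (fN x).
Qed.

Definition pinv f : ptrans n := [ffun y => [pick x | f x == Some y]].

Lemma ptrans_ext f k : (forall x y, (f x == Some y) = (k x == Some y)) -> f = k.
Proof.
move=> H; apply/ffunP => x; case Ef: (f x) => [y|]; case Ek: (k x) => [z|] //.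
- by have := H x y; rewrite Ef Ek eqxx => /esym/eqP[->].
- by have := H x y; rewrite Ef Ek eqxx.
- by have := H x z; rewrite Ef Ek eqxx.
Qed.

Lemma pinvE f x y : pinj f -> (pinv f y == Some x) = (f x == Some y).
Proof.
move=> If; rewrite ffunE; case: pickP => [x' /eqP fx'|none].
  by apply/eqP/eqP => [[<-] //|fx]; rewrite (If _ _ _ fx' fx).
by have := none x; rewrite /= => ->.
Qed.

Lemma pinv_inj f : pinj (pinv f).
Proof.
move=> y y' x; rewrite !ffunE; case: pickP => // x1 /eqP f1 [<-].
by case: pickP => // x2 /eqP f2 [E]; move: f1; rewrite -E f2 => -[].
Qed.

Lemma pinvK f : pinj f -> pinv (pinv f) = f.
Proof. by move=> If; apply: ptrans_ext => x y; rewrite !pinvE //; exact: pinv_inj. Qed.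

Lemma pinv_comp f k : pinj f -> pinj k -> pinv (pcomp f k) = pcomp (pinv k) (pinv f).
Proof.
move=> If Ik; apply: ptrans_ext => z x; rewrite pinvE ?pcompE; last exact: pinj_comp.
apply/idP/idP.
  case Ex: (f x) => [y|] //= /eqP kyz.
  have -> : pinv k z = Some y by apply/eqP; rewrite pinvE // kyz.
  by rewrite /= pinvE // Ex.
case Ez: (pinv k z) => [y|] //= /eqP fyx; move/eqP: Ez; rewrite pinvE // => /eqP kyz.
by move/eqP: fyx; rewrite pinvE // => /eqP ->; rewrite /= kyz.
Qed.

Lemma pinv_restrict W f : pinj f -> pinv (restrict W f) = restrict W (pinv f).
Proof.
move=> If; apply: ptrans_ext => y x; rewrite pinvE; last exact: restrict_inj.
apply/idP/idP.
  move/eqP/restrictS => [xW yW fx]; rewrite restrictE yW.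
  have -> : pinv f y = Some x by apply/eqP; rewrite pinvE // fx.
  by rewrite /= xW.
move/eqP/restrictS => [yW xW /eqP]; rewrite pinvE // => /eqP fx.
by rewrite restrictE xW fx /= yW.
Qed.

Lemma pinv0 : pinv (pzero n) = pzero n.
Proof. by apply/ffunP => y; rewrite !ffunE; case: pickP => // x; rewrite ffunE. Qed.

Lemma pinv_eq0 f : pinj f -> (pinv f == pzero n) = (f == pzero n).
Proof.
by move=> If; apply/eqP/eqP => [E|->]; [rewrite -(pinvK If) E pinv0 | exact: pinv0].
Qed.

Lemma pinv_imsetD0 (A : {set ptrans n}) : {in A, forall f, pinj f} ->
  pinv @: A :\ pzero n = pinv @: (A :\ pzero n).
Proof.
move=> AI; apply/setP => f; rewrite in_setD1.
apply/andP/imsetP => [[nz /imsetP[k kA fk]]|[k /setD1P[nz kA] ->]].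
  by subst f; exists k; rewrite // in_setD1 kA andbT -(pinv_eq0 (AI k kA)).
by split; [rewrite pinv_eq0 //; exact: AI | exact: imset_f].
Qed.

Lemma card_pinv_imset (A : {set ptrans n}) : {in A, forall f, pinj f} -> #|pinv @: A| = #|A|.
Proof. by move=> AI; apply: card_in_imset => k l /AI Ik /AI Il E; rewrite -(pinvK Ik) E pinvK. Qed.

Lemma pinv_pid f : (forall x y, f x = Some y -> y = x) -> pinv f = f.
Proof.
move=> fid; apply: ptrans_ext => y x; rewrite pinvE; last exact: pinj_pid.
by apply/eqP/eqP => E; move: (fid _ _ E) (E) => ->.
Qed.
End PartialMaps.

Lemma card_split n (A B : {set 'I_n}) : B \subset A -> #|A| = #|A :\: B| + #|B|.
Proof. by move=> sub; rewrite -(cardsID B A) (setIidPr sub) addnC. Qed.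

Lemma card_setD_lt n (A B : {set 'I_n}) y : y \in A -> y \in B -> #|A :\: B| < #|A|.
Proof.
move=> yA yB; apply: proper_card; apply/properP; split; first exact: subsetDl.
by exists y; rewrite // in_setD yB.
Qed.

Lemma add_bound a b c d e : a <= c + e -> c + d <= b -> a + d <= b + e.
Proof. by lia. Qed.

Lemma ppow_in n (S : {set ptrans n}) f m :
  (forall f k, f \in S -> k \in S -> pcomp f k \in S) -> f \in S -> ppow f m \in S.
Proof. by move=> Scomp fS; elim: m => [|m IH] //=; exact: Scomp. Qed.

Record setting n (S : {set ptrans n}) (g h : ptrans n) : Prop := Setting {
  S_inj : forall f, f \in S -> pinj f;
  S_comp : forall f k, f \in S -> k \in S -> pcomp f k \in S;
  g_in : g \in S;
  h_in : h \in S;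
  g_pid : forall x y, g x = Some y -> y = x;
  h_pid : forall x y, h x = Some y -> y = x;
  gh_dom : forall x, (g x == None) = (h x != None);
  idem_gh : forall f, f \in S -> pcomp f f = f -> f != pzero n -> f = g \/ f = h;
  S_semitrans : semitransitive S }.

Section FromHypotheses.
Variables (n : nat) (S : {set ptrans n}) (g h : ptrans n).
Hypothesis HS : subsemigroup_In_minus_Sn S.
Hypothesis Hst : semitransitive S.
Hypothesis Hidem : [set f in S | idempotentb f & f != pzero n] = [set g; h].
Implicit Types (f : ptrans n) (x : 'I_n).

Lemma Sinj f : f \in S -> pinj f.
Proof. by case: HS => HSn _ /HSn /andP[/pinjP]. Qed.

Lemma idem_memE f : (f \in S) && [&& pcomp f f == f & f != pzero n] = (f \in [set g; h]).
Proof. by rewrite -Hidem !inE. Qed.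

Lemma g_props : [/\ g \in S, pcomp g g = g & g != pzero n].
Proof. by have := idem_memE g; rewrite set21 => /and3P[? /eqP ? ?]. Qed.

Lemma h_props : [/\ h \in S, pcomp h h = h & h != pzero n].
Proof. by have := idem_memE h; rewrite set22 => /and3P[? /eqP ? ?]. Qed.

Lemma idem_in f : f \in S -> pcomp f f = f -> f != pzero n -> f = g \/ f = h.
Proof. by move=> fS ff fnz; apply/set2P; rewrite -idem_memE fS ff eqxx. Qed.

Lemma not_total f : f \in S -> exists x, f x = None.
Proof.
case: HS => HSn _ /HSn /andP[/pinjP If]; rewrite /is_permb.
move/pinjP: If => -> /= /forallPn[x]; rewrite negbK => /eqP; by exists x.
Qed.

(* Every point is fixed by some element of S, hence by an idempotent power of it,
   which is g or h. *)
Lemma gh_cover x : (g x != None) || (h x != None).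
Proof.
have [f fS [fx|fx]] := Hst x x; have [m Em] := ppow_idem f;
  have px := ppow_fix m fx;
  have nz : ppow f m != pzero n by apply/eqP => E; move: px; rewrite E ffunE.
all: by case: (idem_in (ppow_in m HS.2 fS) Em nz) => <-; rewrite px ?orbT.
Qed.

(* The domains of g and h are disjoint: otherwise gh would be a nonzero idempotent
   defined on the intersection, and being g or h it would force h or g to be total. *)
Lemma gh_disjoint x : g x != None -> h x != None -> False.
Proof.
have [gS gg _] := g_props; have [hS hh _] := h_props.
have gid := idem_pid (Sinj gS) gg; have hid := idem_pid (Sinj hS) hh.
have ghE y : pcomp g h y = if g y is Some _ then h y else None.
  by rewrite pcompE; case E: (g y) => [z|] //=; rewrite (gid _ _ E).
move=> gx hx; have ghS : pcomp g h \in S := HS.2 _ _ gS hS.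
have gh_idem : pcomp (pcomp g h) (pcomp g h) = pcomp g h.
  apply/ffunP => y; rewrite pcompE ghE; case Eg: (g y) => [z|] //.
  case Eh: (h y) => [w|] //=; have wy := hid _ _ Eh; subst w.
  by rewrite ghE Eg Eh.
have gh_nz : pcomp g h != pzero n.
  apply/eqP => E; have := ghE x; rewrite E ffunE.
  by case: (g x) gx => [a|] //= _ /esym/eqP; rewrite (negbTE hx).
case: (idem_in ghS gh_idem gh_nz) => E.
  have [y hy] := not_total hS; have := gh_cover y; rewrite hy orbF.
  by have := ghE y; rewrite E hy; case: (g y).
have [y gy] := not_total gS; have := gh_cover y; rewrite gy /=.
by have := ghE y; rewrite E gy => ->.
Qed.

Lemma setting_of_hyps : setting S g h.
Proof.
have [gS gg _] := g_props; have [hS hh _] := h_props.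
split => //; first exact: Sinj; first exact: HS.2.
- exact: idem_pid (Sinj gS) gg.
- exact: idem_pid (Sinj hS) hh.
- move=> x; have := gh_cover x; have := @gh_disjoint x.
  by case: (g x); case: (h x) => //= a b /(_ isT isT).
- exact: idem_in.
Qed.
End FromHypotheses.

Section Setting.
Variables (n : nat) (S : {set ptrans n}) (g h : ptrans n).
Hypothesis H : setting S g h.
Implicit Types (f k s t : ptrans n) (x y z a b c p q v : 'I_n) (W V : {set 'I_n}).

Local Notation reach := (reachb S).

Definition side x := g x != None.

Definition idem_of x := if side x then g else h.

Lemma gE x : g x = if side x then Some x else None.
Proof. by rewrite /side; case E: (g x) => [y|] //=; rewrite (g_pid H E). Qed.

Lemma hE x : h x = if side x then None else Some x.
Proof.
have := gh_dom H x; rewrite /side; case E: (h x) => [y|]; case: (g x) => //=.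
by rewrite (h_pid H E).
Qed.

Lemma idem_ofE x y : idem_of x y = if side y == side x then Some y else None.
Proof. by rewrite /idem_of; case: (side x); rewrite ?gE ?hE; case: (side y). Qed.

Lemma idem_of_in x : idem_of x \in S.
Proof. by rewrite /idem_of; case: (side x); [exact: g_in H | exact: h_in H]. Qed.

Lemma reachP x y : reflect (exists2 f, f \in S & f x = Some y) (reach x y).
Proof.
apply: (iffP existsP) => [[f /andP[fS /eqP E]]|[f fS E]]; first by exists f.
by exists f; rewrite fS E eqxx.
Qed.

Lemma reach_refl x : reach x x.
Proof. by apply/reachP; have [f fS [E|E]] := S_semitrans H x x; exists f. Qed.

Lemma reach_trans x y z : reach x y -> reach y z -> reach x z.
Proof.
move=> /reachP[f fS E1] /reachP[k kS E2]; apply/reachP; exists (pcomp f k).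
  exact: (S_comp H fS kS).
by rewrite pcompE E1.
Qed.

Lemma reach_total x y : reach x y || reach y x.
Proof.
have [f fS [E|E]] := S_semitrans H x y; apply/orP; [left|right]; apply/reachP; by exists f.
Qed.

Lemma fixed_power f x : f \in S -> f x = Some x -> exists m, ppow f m = idem_of x.
Proof.
move=> fS fx; have [m Em] := ppow_idem f; exists m.
have px := ppow_fix m fx.
have nz : ppow f m != pzero n by apply/eqP => E; move: px; rewrite E ffunE.
case: (idem_gh H (ppow_in m (S_comp H) fS) Em nz) => E; rewrite E in px *; rewrite /idem_of.
  by have := gE x; rewrite px; case: (side x).
by have := hE x; rewrite px; case: (side x).
Qed.

Lemma dichotomy s a c y : s \in S -> s a = Some c -> reach c a -> side y = side a ->
  exists2 z, s y = Some z & reach z y.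
Proof.
move=> sS sa /reachP[t tS tc] sy.
set r := pcomp s t; have rS : r \in S := S_comp H sS tS.
have ra : r a = Some a by rewrite /r pcompE sa /= tc.
have [m Em] := fixed_power rS ra.
have ry : ppow r m y = Some y by rewrite Em idem_ofE sy eqxx.
have [u uS uE] : exists2 u, u \in S & ppow r m = pcomp s u.
  case: m {Em ry} => [|m]; first by exists t.
  exists (pcomp t (ppow r m)); first exact: (S_comp H tS (ppow_in m (S_comp H) rS)).
  by rewrite ppowS pcompA.
move: ry; rewrite uE pcompE; case E: (s y) => [z|] //= uz.
by exists z => //; apply/reachP; exists u.
Qed.

Lemma stays_lower s x b a c : s \in S -> s x = Some b -> ~~ reach b x ->
  side a = side x -> s a = Some c -> ~~ reach c a.
Proof.
move=> sS sx nbx sa sc; apply/negP => rca.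
have [z] := dichotomy sS sc rca (esym sa); rewrite sx => -[<-].
by rewrite (negbTE nbx).
Qed.

Definition convex W := forall a b c, a \in W -> c \in W -> reach a b -> reach b c -> b \in W.

Definition sbelow x a := reach x a && ~~ reach a x.

Definition rank x := #|[set y | reach x y]|.

Lemma rank_lt x y : reach x y -> ~~ reach y x -> rank y < rank x.
Proof.
move=> rxy nyx; apply: proper_card; apply/properP; split.
  by apply/subsetP=> z; rewrite !inE => ryz; exact: reach_trans rxy ryz.
by exists x; rewrite !inE ?reach_refl // (negbTE nyx).
Qed.

Definition side_bottom W p :=
  p \in W /\ forall q, q \in W -> side q = side p -> reach p q -> reach q p.

Lemma exists_side_bottom W (C : bool) q0 : q0 \in W -> side q0 = C ->
  exists p, side_bottom W p /\ side p = C.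
Proof.
move=> q0W sq0; have P0 : (q0 \in W) && (side q0 == C) by rewrite q0W sq0 eqxx.
case: (@arg_minnP _ q0 (fun q => (q \in W) && (side q == C)) rank P0) => p /andP[pW /eqP spC] pmin.
exists p; split => //; split => // q qW sq rpq.
case: (boolP (reach q p)) => // nqp.
have := pmin q; rewrite qW sq spC eqxx => /(_ isT).
by rewrite leqNgt (rank_lt rpq nqp).
Qed.

Lemma sbelow_trans x b a : sbelow x b -> reach b a -> sbelow x a.
Proof.
move=> /andP[rxb nbx] rba; rewrite /sbelow (reach_trans rxb rba) /=.
by apply: contra nbx => rax; exact: reach_trans rba rax.
Qed.

Definition drop_map W x p s :=
  [/\ s \in S, s x = Some p & forall a c, a \in W -> sbelow x a -> s a = Some c -> c \notin W].

Lemma drop_map_block W x p : side_bottom W p -> reach x p -> reach p x ->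
  exists s, drop_map W x p s.
Proof.
move=> [pW pbot] rxp rpx; have [t tS tx] := reachP _ _ rxp.
exists (pcomp (pcomp (idem_of x) t) (idem_of p)); split.
- exact: (S_comp H (S_comp H (idem_of_in x) tS) (idem_of_in p)).
- by rewrite !pcompE idem_ofE eqxx /= tx /= idem_ofE eqxx.
move=> a c aW /andP[rxa nax]; rewrite !pcompE idem_ofE.
case: eqP => //= sa; case ta: (t a) => [c'|] //=; rewrite idem_ofE.
case: eqP => //= sc' [<-]; apply: contra nax => c'W.
have rac' : reach a c' by apply/reachP; exists t.
have rc'p := pbot _ c'W sc' (reach_trans (reach_trans rpx rxa) rac').
exact: reach_trans rac' (reach_trans rc'p rpx).
Qed.

Lemma highest_below W x q : q \in W -> sbelow x q ->
  exists b, [/\ b \in W, sbelow x b & forall a, a \in W -> sbelow x a -> reach b a].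
Proof.
move=> qW sxq; have P0 : (q \in W) && sbelow x q by rewrite qW.
case: (@arg_maxnP _ q (fun a => (a \in W) && sbelow x a) rank P0) => b /andP[bW sxb] bmax.
exists b; split => // a aW sxa; case/orP: (reach_total b a) => // rab.
case: (boolP (reach b a)) => // nba.
by have := bmax a; rewrite aW sxa /geq /= leqNgt (rank_lt rab nba) => /(_ isT).
Qed.

(* Induction on the number of points of W strictly below x: either x and p lie
   in one block, or we go down from x to the highest point b of W below x and
   compose with the drop map of b. *)
Lemma drop_map_exists W x p : convex W -> side_bottom W p -> x \in W -> reach x p ->
  exists s, drop_map W x p s.
Proof.
move=> cvx pbot; have [pW _] := pbot.
move: {2}#|_| (leqnn #|[set a in W | sbelow x a]|) => m.
elim: m x => [|m IH] x Tm xW rxp.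
all: case: (boolP (reach p x)) => [rpx|npx]; first exact: drop_map_block.
all: have sxp : sbelow x p by rewrite /sbelow rxp.
  by move: Tm; rewrite leqn0 cards_eq0 => /eqP/setP/(_ p); rewrite !inE pW sxp.
have [b [bW sxb bhigh]] := highest_below pW sxp.
have Tb : #|[set a in W | sbelow b a]| <= m.
  rewrite -ltnS; apply: leq_trans Tm; apply: proper_card; apply/properP; split.
    apply/subsetP => a; rewrite !inE => /andP[aW sba]; rewrite aW /=.
    exact: sbelow_trans sxb (andP sba).1.
  exists b; rewrite !inE ?bW //=; apply/negP => /andP[_ /negP]; apply; exact: reach_refl.
have [sb [sbS sbb sbdrop]] := IH b Tb bW (bhigh p pW sxp).
have [k kS kx] := reachP _ _ (andP sxb).1.
exists (pcomp (pcomp (idem_of x) k) sb); split.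
- exact: (S_comp H (S_comp H (idem_of_in x) kS) sbS).
- by rewrite !pcompE idem_ofE eqxx /= kx /= sbb.
move=> a c' aW sxa; rewrite !pcompE idem_ofE; case: eqP => //= sa.
case ka: (k a) => [c|] //= sbc; apply/negP => c'W.
have nca : ~~ reach c a := stays_lower kS kx (andP sxb).2 sa ka.
have rac : reach a c by apply/reachP; exists k.
have sbc' : sbelow b c.
  rewrite /sbelow (reach_trans (bhigh a aW sxa) rac) /=.
  by apply: contra nca => rcb; exact: reach_trans rcb (bhigh a aW sxa).
have cW : c \in W by apply: (cvx a c c') => //; apply/reachP; exists sb.
by have := sbdrop c c' cW sbc' sbc; rewrite c'W.
Qed.

Definition Nmaps := sandwich S g h :|: sandwich S h g.
Definition Nres W := [set restrict W f | f in Nmaps] :\ pzero n.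

Lemma Nmaps_cross f : f \in Nmaps ->
  exists C, forall a b, f a = Some b -> side a = C /\ side b = ~~ C.
Proof.
rewrite inE => /orP[] /imsetP[s sS ->]; [exists true | exists false];
  move=> a b; rewrite !pcompE ?gE ?hE; case: (side a) => //=;
  case: (s a) => [c|] //=; rewrite ?gE ?hE; case: ifP => // sc [<-]; by rewrite sc.
Qed.

Lemma Nmaps_inj f : f \in Nmaps -> pinj f.
Proof.
rewrite inE => /orP[] /imsetP[s sS ->].
all: by apply: pinj_comp; [apply: pinj_comp|]; apply: (S_inj H); rewrite ?(g_in H) ?(h_in H).
Qed.

Lemma Nres_cross W mu : mu \in Nres W ->
  exists C, forall a b, mu a = Some b -> side a = C /\ side b = ~~ C.
Proof.
rewrite !inE => /andP[_ /imsetP[f fN ->]]; have [C HC] := Nmaps_cross fN.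
by exists C => a b /restrictS[_ _ /HC].
Qed.

Lemma Nres_inj W mu : mu \in Nres W -> pinj mu.
Proof. by rewrite !inE => /andP[_ /imsetP[f /Nmaps_inj fN ->]]; exact: restrict_inj. Qed.

Lemma Nres_gain W W' (F : {set ptrans n}) : W' \subset W -> F \subset Nres W ->
  (forall mu, mu \in F -> restrict W' mu = pzero n) -> #|Nres W'| + #|F| <= #|Nres W|.
Proof.
move=> sWW' sF F0.
have sub : Nres W' \subset [set restrict W' mu | mu in Nres W :\: F].
  apply/subsetP => nu; rewrite !inE => /andP[nz /imsetP[f fN Enu]]; subst nu.
  apply/imsetP; exists (restrict W f); last by rewrite restrict_sub.
  rewrite !inE; apply/and3P; split.
  - by apply: contra nz => /F0; rewrite restrict_sub // => ->.
  - by apply: contra nz => /eqP E; rewrite -(restrict_sub f sWW') E restrict0.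
  - exact: imset_f.
have := leq_trans (subset_leq_card sub) (leq_imset_card _ _).
by rewrite cardsD (setIidPr sF) addnC -leq_subRL // subset_leq_card.
Qed.

Lemma card_common_target (X : {set 'I_n}) (F : {set ptrans n}) p :
  (forall mu, mu \in F -> pinj mu) ->
  (forall x, x \in X -> exists2 mu, mu \in F & mu x = Some p) -> #|X| <= #|F|.
Proof.
move=> Finj HX; pose phi (mu : ptrans n) := odflt p [pick y | mu y == Some p].
have sub : X \subset [set phi mu | mu in F].
  apply/subsetP => x xX; have [mu muF mux] := HX x xX.
  apply/imsetP; exists mu => //; rewrite /phi.
  case: pickP => [y /eqP muy|]; last by move/(_ x); rewrite mux eqxx.
  by rewrite /= (Finj mu muF _ _ _ muy mux).
exact: leq_trans (subset_leq_card sub) (leq_imset_card _ _).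
Qed.

Lemma card_common_source (P : {set 'I_n}) (F : {set ptrans n}) x :
  (forall p, p \in P -> exists2 mu, mu \in F & mu x = Some p) -> #|P| <= #|F|.
Proof.
move=> HP; pose phi (mu : ptrans n) := odflt x (mu x).
have sub : P \subset [set phi mu | mu in F].
  apply/subsetP => p pP; have [mu muF mux] := HP p pP.
  by apply/imsetP; exists mu; rewrite // /phi mux.
exact: leq_trans (subset_leq_card sub) (leq_imset_card _ _).
Qed.

Definition top W := [set x in W | [forall y in W, reach x y]].
Definition bot W := [set z in W | [forall y in W, reach y z]].

Lemma topW W x : x \in top W -> x \in W.
Proof. by rewrite inE => /andP[]. Qed.

Lemma botW W z : z \in bot W -> z \in W.
Proof. by rewrite inE => /andP[]. Qed.

Lemma top_reach W x y : x \in top W -> y \in W -> reach x y.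
Proof. by rewrite inE => /andP[_ /forallP/(_ y)/implyP]; apply. Qed.

Lemma bot_reach W y z : z \in bot W -> y \in W -> reach y z.
Proof. by rewrite inE => /andP[_ /forallP/(_ y)/implyP]; apply. Qed.

Lemma top_sbelow W x a : x \in top W -> a \in W -> a \notin top W -> sbelow x a.
Proof.
move=> xt aW nat; rewrite /sbelow (top_reach xt aW) /=; apply: contra nat => rax.
rewrite inE aW; apply/forallP => y; apply/implyP => yW.
exact: reach_trans rax (top_reach xt yW).
Qed.

Lemma bot_side_bottom W p : p \in bot W -> side_bottom W p.
Proof. by move=> pb; split=> [|q qW _ _]; [exact: botW pb | exact: bot_reach pb qW]. Qed.

Definition top_maps W := [set mu in Nres W | restrict (W :\: top W) mu == pzero n].

Lemma top_maps_sub W : top_maps W \subset Nres W.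
Proof. by apply/subsetP => mu; rewrite inE => /andP[]. Qed.

Lemma top_maps_res W mu : mu \in top_maps W -> restrict (W :\: top W) mu = pzero n.
Proof. by rewrite inE => /andP[_ /eqP]. Qed.

Lemma top_maps_inj W mu : mu \in top_maps W -> pinj mu.
Proof. by move/(subsetP (top_maps_sub W)); exact: Nres_inj. Qed.

(* A point x of the top block is sent to any lowest point p of the other side by
   a map of N_W vanishing below the top block: restrict a drop map, framed by
   the idempotents of the two sides, to W. *)
Lemma top_map W x p : convex W -> x \in top W -> side_bottom W p -> side p != side x ->
  exists2 mu, mu \in top_maps W & mu x = Some p.
Proof.
move=> cvx xt pbot spx; have xW := topW xt; have [pW _] := pbot.
have [s [sS sx sdrop]] := drop_map_exists cvx pbot xW (top_reach xt pW).
set nu := pcomp (pcomp (idem_of x) s) (idem_of p).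
have nuN : nu \in Nmaps.
  rewrite inE /nu /idem_of; move: spx; case: (side x); case: (side p) => // _.
    by apply/orP; left; apply/imsetP; exists s.
  by apply/orP; right; apply/imsetP; exists s.
have nux : nu x = Some p by rewrite /nu !pcompE idem_ofE eqxx /= sx /= idem_ofE eqxx.
exists (restrict W nu); last by rewrite restrictE xW nux /= pW.
rewrite !inE imset_f // andbT; apply/andP; split.
  by apply/eqP => /(congr1 (fun f : ptrans n => f x)); rewrite restrictE xW nux /= pW ffunE.
rewrite restrict_sub ?subsetDl //; apply/eqP/ffunP => a; rewrite restrictE [pzero n a]ffunE.
case: (boolP (a \in W :\: top W)) => // /setDP[aW nta].
rewrite /nu !pcompE idem_ofE; case: eqP => //= _; case sa: (s a) => [c|] //=.
rewrite idem_ofE; case: eqP => //= _; have := sdrop a c aW (top_sbelow xt aW nta) sa.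
by rewrite in_setD => /negbTE->; rewrite andbF.
Qed.

(* Removing the top block from a convex W lying on both sides loses at least
   |top W| maps of N_W: the points of top W on each side are sent to one lowest
   point of the other side by distinct maps. *)
Lemma peel_top W : convex W -> (exists2 a, a \in W & side a) -> (exists2 b, b \in W & ~~ side b) ->
  #|Nres (W :\: top W)| + #|top W| <= #|Nres W|.
Proof.
move=> cvx [a aW sa] [b bW sb].
have [p1 [bp1 sp1]] := exists_side_bottom (C := false) bW (negbTE sb).
have [p2 [bp2 sp2]] := exists_side_bottom (C := true) aW sa.
apply: leq_trans (Nres_gain (subsetDl W (top W)) (top_maps_sub W) (@top_maps_res W)).
rewrite leq_add2l.
set F1 := [set mu in top_maps W | [exists y, side y && (mu y != None)]].
rewrite -(cardsID [set x | side x] (top W)) -(cardsID F1 (top_maps W)).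
apply: leq_add.
  apply: (card_common_target (p := p1)) => [mu|x /setIP[xt]].
    by rewrite inE => /andP[/top_maps_inj].
  rewrite inE => sx; have [|mu muF mux] := top_map cvx xt bp1; first by rewrite sp1 sx.
  exists mu => //; apply/setIP; split => //.
  by rewrite inE muF; apply/existsP; exists x; rewrite sx mux.
apply: (card_common_target (p := p2)) => [mu|x /setDP[xt]].
  by rewrite in_setD => /andP[_ /top_maps_inj].
rewrite inE => sx; have [|mu muF mux] := top_map cvx xt bp2; first by rewrite sp2; case: (side x) sx.
exists mu => //; rewrite in_setD muF andbT inE muF /=.
apply/negP => /existsP[y /andP[sy]]; case E: (mu y) => [z|] // _.
have [C HC] := Nres_cross (subsetP (top_maps_sub W) _ muF).
by have [Cy _] := HC _ _ E; have [Cx _] := HC _ _ mux; move: sx; rewrite Cx -Cy sy.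
Qed.

Lemma peel_top_targets W x (P : {set 'I_n}) : convex W -> x \in top W ->
  (forall p, p \in P -> side_bottom W p /\ side p != side x) ->
  #|Nres (W :\: top W)| + #|P| <= #|Nres W|.
Proof.
move=> cvx xt HP.
apply: leq_trans (Nres_gain (subsetDl W (top W)) (top_maps_sub W) (@top_maps_res W)).
rewrite leq_add2l; apply: (card_common_source (x := x)) => p pP.
by have [bp sp] := HP p pP; exact: top_map.
Qed.

Lemma peel_top_sources W p (X : {set 'I_n}) : convex W -> side_bottom W p ->
  X \subset top W -> (forall x, x \in X -> side x != side p) ->
  #|Nres (W :\: top W)| + #|X| <= #|Nres W|.
Proof.
move=> cvx bp sX HX.
apply: leq_trans (Nres_gain (subsetDl W (top W)) (top_maps_sub W) (@top_maps_res W)).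
rewrite leq_add2l; apply: (card_common_target (p := p)); first exact: top_maps_inj.
by move=> x xX; apply: top_map => //; [exact: (subsetP sX) | rewrite eq_sym; exact: HX].
Qed.

Lemma top_exists W x : x \in W -> exists y, y \in top W.
Proof.
move=> xW; case: (@arg_maxnP _ x (fun a => a \in W) rank xW) => m mW mmax.
exists m; rewrite inE mW; apply/forallP => y; apply/implyP => yW.
case/orP: (reach_total m y) => // rym; case: (boolP (reach m y)) => // nmy.
by have := leq_ltn_trans (mmax y yW) (rank_lt rym nmy); rewrite ltnn.
Qed.

Lemma bot_exists W x : x \in W -> exists y, y \in bot W.
Proof.
move=> xW; case: (@arg_minnP _ x (fun a => a \in W) rank xW) => m mW mmin.
exists m; rewrite inE mW; apply/forallP => y; apply/implyP => yW.
case/orP: (reach_total m y) => // rmy; case: (boolP (reach y m)) => // nym.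
by have := leq_ltn_trans (mmin y yW) (rank_lt rmy nym); rewrite ltnn.
Qed.

Lemma convex_top W : convex W -> convex (W :\: top W).
Proof.
move=> cvx a b c /setDP[aW nat] /setDP[cW _] rab rbc; apply/setDP; split.
  exact: cvx rab rbc.
apply: contra nat => bt; rewrite inE aW; apply/forallP => y.
by apply/implyP => yW; exact: reach_trans rab (top_reach bt yW).
Qed.

Lemma convex_bot W : convex W -> convex (W :\: bot W).
Proof.
move=> cvx a b c /setDP[aW _] /setDP[cW ncb] rab rbc; apply/setDP; split.
  exact: cvx rab rbc.
apply: contra ncb => bb; rewrite inE cW; apply/forallP => y.
by apply/implyP => yW; exact: reach_trans (bot_reach bb yW) rbc.
Qed.

Lemma top_bot W y : y \in top W -> y \in bot W -> W \subset bot W.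
Proof.
move=> yt yb; apply/subsetP => x xW; rewrite inE xW; apply/forallP => z.
by apply/implyP => zW; exact: reach_trans (bot_reach yb zW) (top_reach yt xW).
Qed.

Lemma bot_topD W : ~~ (W \subset bot W) -> bot (W :\: top W) = bot W.
Proof.
move=> nsub; apply/setP => z; apply/idP/idP.
  rewrite inE => /andP[/setDP[zW nzt] /forallP Hz]; rewrite inE zW; apply/forallP => y.
  apply/implyP => yW; case: (boolP (y \in top W)) => yt; first exact: top_reach yt zW.
  by have /implyP := Hz y; apply; apply/setDP.
move=> zb; rewrite inE; apply/andP; split.
  apply/setDP; split; first exact: botW zb.
  by apply: contra nsub => zt; exact: top_bot zt zb.
by apply/forallP => y; apply/implyP => /setDP[yW _]; exact: bot_reach zb yW.
Qed.

(* If all of V above its bottom block lies on side C while some bottom point does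
   not, then N_V has at least as many elements as V has points above the bottom
   block or in its C-part: peel off top blocks, each sent to that bottom point. *)
Lemma one_sided_bound V (C : bool) : convex V ->
  (forall v, v \in V :\: bot V -> side v = C) ->
  (exists2 z, z \in bot V & side z != C) ->
  #|V :\: bot V| + #|bot V :&: [set x | side x == C]| <= #|Nres V|.
Proof.
have [m] := ubnP #|V|; elim: m V => // m IH V; rewrite ltnS => Vm cvx HC [z zb szC].
have zbot := bot_side_bottom zb.
case: (boolP (V \subset bot V)) => [sub|nsub].
  have -> : V :\: bot V = set0 by apply/eqP; rewrite setD_eq0.
  rewrite cards0 add0n; apply: leq_trans (leq_addl _ _) (peel_top_sources cvx zbot _ _).
    apply/subsetP => x /setIP[xb _]; rewrite inE (botW xb); apply/forallP => y.
    by apply/implyP => /(subsetP sub) yb; exact: bot_reach yb (botW xb).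
  by move=> x /setIP[_]; rewrite inE => /eqP->; rewrite eq_sym.
have [x0 x0V nx0b] := subsetPn nsub.
have topsub : top V \subset V :\: bot V.
  apply/subsetP => y yt; apply/setDP; split; first exact: topW yt.
  by apply: contra nsub => yb; exact: top_bot yt yb.
have sd x : x \in top V -> side x != side z.
  by move=> xt; rewrite (HC x (subsetP topsub _ xt)) eq_sym.
have G := peel_top_sources cvx zbot (subxx (top V)) sd.
have [y0 y0t] := top_exists x0V.
have Vlt : #|V :\: top V| < m.
  apply: leq_trans Vm; apply: proper_card; apply/properP; split; first exact: subsetDl.
  by exists y0; [exact: topW y0t | rewrite in_setD y0t].
have HC' v : v \in V :\: top V :\: bot (V :\: top V) -> side v = C.
  by rewrite bot_topD // !in_setD => /and3P[vb _ vV]; apply: HC; rewrite in_setD vb vV.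
have := IH _ Vlt (convex_top cvx) HC'; rewrite bot_topD // => /(_ (ex_intro2 _ _ z zb szC)).
have -> : #|V :\: bot V| = #|V :\: top V :\: bot V| + #|top V|.
  rewrite -(cardsID (top V) (V :\: bot V)) (setIidPr topsub) addnC; congr (_ + _).
  by apply: eq_card => x; rewrite !in_setD andbCA.
by rewrite addnAC => IHV; apply: leq_trans G; rewrite leq_add2r.
Qed.

Definition two_sided W := [exists a in W, side a] && [exists b in W, ~~ side b].

Lemma two_sidedP W : two_sided W ->
  (exists2 a, a \in W & side a) /\ (exists2 b, b \in W & ~~ side b).
Proof. by case/andP => /existsP[a /andP[aW sa]] /existsP[b /andP[bW sb]]; split; [exists a|exists b]. Qed.

Lemma one_sided V x v : ~~ two_sided V -> x \in V -> v \in V -> side v = side x.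
Proof.
rewrite negb_and => /orP[] /existsPn Hs xV vV; have := Hs v; have := Hs x.
all: by rewrite xV vV /=; case: (side v); case: (side x).
Qed.

Lemma two_sided_sides W (C : bool) : two_sided W -> exists2 c, c \in W & side c != C.
Proof.
move=> /two_sidedP[[a aW sa] [b bW sb]].
by case: C; [exists b => //; case: (side b) sb | exists a => //; case: (side a) sa].
Qed.

Lemma one_sided_union W A B x : ~~ two_sided A -> ~~ two_sided B -> x \in A -> x \in B ->
  W \subset A :|: B -> ~~ two_sided W.
Proof.
move=> oA oB xA xB sub; apply/negP => /two_sidedP[[a aW sa] [b bW sb]].
have one v : v \in W -> side v = side x.
  by move=> /(subsetP sub)/setUP[vA|vB]; [exact: one_sided oA xA vA | exact: one_sided oB xB vB].
by move: sa sb; rewrite (one a aW) (one b bW) => ->.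
Qed.

Lemma bound_peel_top W (r : nat) : convex W -> two_sided W ->
  #|W :\: top W| <= #|Nres (W :\: top W)| + r -> #|W| <= #|Nres W| + r.
Proof.
move=> cvx /two_sidedP[sa sb] IHW.
have topW' : top W \subset W by apply/subsetP => v /topW.
by rewrite (card_split topW'); exact: add_bound IHW (peel_top cvx sa sb).
Qed.

(* The case where W minus its bottom block is one-sided: the top block of W is
   sent to the bottom points of the other side, and the rest is counted by
   one_sided_bound. *)
Lemma peel_top_one_sided W : convex W -> two_sided W -> ~~ two_sided (W :\: bot W) ->
  [disjoint top W & bot W] -> #|W :\: top W| <= #|Nres W|.
Proof.
move=> cvx tw ow dTB.
have [[a aW _] _] := two_sidedP tw; have [y yt] := top_exists aW.
have ynb : y \notin bot W by rewrite (disjointFr dTB yt).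
have yWb : y \in W :\: bot W by rewrite in_setD ynb (topW yt).
set C := side y; set P := bot W :&: [set p | side p != C].
have G := peel_top_targets (P := P) cvx yt.
have {}G : #|Nres (W :\: top W)| + #|P| <= #|Nres W|.
  by apply: G => p /setIP[pb]; rewrite inE => sp; split => //; exact: bot_side_bottom.
have nsub : ~~ (W \subset bot W) by apply/subsetPn; exists y => //; exact: topW.
have [c cW scC] := two_sided_sides C tw.
have cb : c \in bot W.
  by apply: contraR scC => ncb; rewrite (one_sided ow yWb) // in_setD ncb.
have HC v : v \in W :\: top W :\: bot (W :\: top W) -> side v = C.
  by rewrite bot_topD // !in_setD => /and3P[vb _ vW]; apply: (one_sided ow yWb); rewrite in_setD vb vW.
have := one_sided_bound (convex_top cvx) HC; rewrite bot_topD //.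
move=> /(_ (ex_intro2 _ _ c cb scC)) R.
have bsub : bot W \subset W :\: top W.
  apply/subsetP => v vb; rewrite in_setD (botW vb) andbT.
  by rewrite (disjointFl dTB vb).
have -> : #|W :\: top W| = #|W :\: top W :\: bot W| + #|bot W :&: [set x | side x == C]| + #|P|.
  rewrite -(cardsID (bot W) (W :\: top W)) (setIidPr bsub) addnC -addnA.
  congr (_ + _); rewrite -(cardsID [set x | side x == C] (bot W)); congr (_ + _).
  by apply: eq_card => v; rewrite !inE andbC.
by apply: leq_trans G; rewrite leq_add2r.
Qed.
End Setting.

(* Inverting every map of S gives a semigroup in the same setting, in which the
   preorder is reversed: top and bottom blocks swap while blocks and the sizes
   of the sets N_W are unchanged.  This turns each statement about top blocks
   into one about bottom blocks. *)
Section Inversion.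
Variables (n : nat) (S : {set ptrans n}) (g h : ptrans n).
Hypothesis H : setting S g h.
Implicit Types (x y : 'I_n) (W : {set 'I_n}).

Local Notation S' := ((@pinv n) @: S).

Lemma inv_memP f : reflect (exists2 k, k \in S & f = pinv k) (f \in S').
Proof. exact: imsetP. Qed.

Lemma g_inv : pinv g = g. Proof. exact: pinv_pid (g_pid H). Qed.
Lemma h_inv : pinv h = h. Proof. exact: pinv_pid (h_pid H). Qed.

Lemma setting_inv : setting S' g h.
Proof.
split; try exact: (g_pid H); try exact: (h_pid H); try exact: (gh_dom H).
- by move=> f /inv_memP[k _ ->]; exact: pinv_inj.
- move=> f k /inv_memP[a aS ->] /inv_memP[b bS ->].
  rewrite -pinv_comp; try exact: (S_inj H).
  by apply: imset_f; exact: (S_comp H bS aS).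
- by rewrite -g_inv; apply: imset_f; exact: (g_in H).
- by rewrite -h_inv; apply: imset_f; exact: (h_in H).
- move=> f /inv_memP[a aS ->] ff nz.
  have Ia := S_inj H aS; have Iaa : pinj (pcomp a a) by exact: pinj_comp.
  have aa : pcomp a a = a by rewrite -(pinvK Iaa) pinv_comp // ff pinvK.
  have anz : a != pzero n by rewrite -pinv_eq0.
  by case: (idem_gh H aS aa anz) => ->; [left|right]; rewrite ?g_inv ?h_inv.
- move=> x y; have [f fS fxy] := S_semitrans H y x; exists (pinv f); first exact: imset_f.
  by case: fxy => E; [left|right]; apply/eqP; rewrite pinvE ?E //; exact: (S_inj H).
Qed.

Lemma reach_inv x y : reachb S' x y = reachb S y x.
Proof.
apply/existsP/existsP => [[f /andP[/inv_memP[k kS ->] E]]|[f /andP[fS E]]].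
  by exists k; rewrite kS /= -pinvE //; exact: (S_inj H).
by exists (pinv f); rewrite imset_f //= pinvE //; exact: (S_inj H).
Qed.

Lemma top_inv W : top S' W = bot S W.
Proof. by apply/setP => x; rewrite !inE; congr (_ && _); apply: eq_forallb => y; rewrite reach_inv. Qed.

Lemma bot_inv W : bot S' W = top S W.
Proof. by apply/setP => x; rewrite !inE; congr (_ && _); apply: eq_forallb => y; rewrite reach_inv. Qed.

Lemma convex_inv W : convex S W -> convex S' W.
Proof. by move=> cvx a b c aW cW; rewrite !reach_inv => rba rcb; exact: cvx cW aW rcb rba. Qed.

Lemma tblock_inv x : tblock S' x = tblock S x.
Proof. by apply/setP => y; rewrite !inE !reach_inv andbC. Qed.

(* (b s a)^-1 = a s^-1 b for the partial identities a, b. *)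
Lemma sandwich_inv a b : pinj a -> pinj b -> pinv a = a -> pinv b = b ->
  sandwich S' a b = (@pinv n) @: sandwich S b a.
Proof.
move=> Ia Ib aI bI; apply/setP => f.
have key s : s \in S -> pcomp (pcomp a (pinv s)) b = pinv (pcomp (pcomp b s) a).
  move=> sS; have Is := S_inj H sS.
  by rewrite (pinv_comp (pinj_comp Ib Is) Ia) (pinv_comp Ib Is) aI bI pcompA.
apply/imsetP/imsetP => [[s' /inv_memP[s sS ->] ->]|[k /imsetP[s sS ->] ->]].
  by exists (pcomp (pcomp b s) a); [exact: imset_f | exact: key].
by exists (pinv s); [exact: imset_f | rewrite key].
Qed.

Lemma Nres_inv W : #|Nres S' g h W| = #|Nres S g h W|.
Proof.
have Ig := pinj_pid (g_pid H); have Ih := pinj_pid (h_pid H).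
set R := [set restrict W k | k in Nmaps S g h].
have RI : {in R, forall k, pinj k}.
  by move=> k /imsetP[f /(Nmaps_inj H) fN ->]; exact: restrict_inj.
have E : [set restrict W f | f in Nmaps S' g h] = (@pinv n) @: R.
  rewrite /Nmaps !sandwich_inv ?g_inv ?h_inv // setUC -imsetU -!imset_comp.
  by apply: eq_in_imset => k kN /=; rewrite pinv_restrict //; exact: (Nmaps_inj H).
rewrite /Nres E pinv_imsetD0 // card_pinv_imset //.
by move=> k /setD1P[_ /RI].
Qed.

Lemma bound_peel_bot W (r : nat) : convex S W -> two_sided g W ->
  #|W :\: bot S W| <= #|Nres S g h (W :\: bot S W)| + r -> #|W| <= #|Nres S g h W| + r.
Proof.
move=> cvx tw; have := bound_peel_top setting_inv (r := r) (convex_inv cvx) tw.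
by rewrite top_inv !Nres_inv.
Qed.
End Inversion.

Section Blocks.
Variables (n : nat) (S : {set ptrans n}) (g h : ptrans n) (x0 : 'I_n).
Hypothesis H : setting S g h.
Implicit Types (y : 'I_n) (W : {set 'I_n}).

Local Notation K := (tblock S x0).

Lemma block_self : x0 \in K.
Proof. by rewrite inE (reach_refl H). Qed.

Lemma top_block W y : K \subset W -> y \in top S W -> y \in K -> top S W = K.
Proof.
move=> KW yt; rewrite inE => /andP[r0y ry0]; apply/setP => w; apply/idP/idP.
  move=> wt; rewrite inE (reach_trans H r0y (top_reach yt (topW wt))).
  by rewrite (reach_trans H (top_reach wt (topW yt)) ry0).
rewrite inE => /andP[r0w rw0]; have wK : w \in K by rewrite inE r0w rw0.
rewrite inE (subsetP KW w wK); apply/forallP => v; apply/implyP => vW.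
exact: (reach_trans H rw0 (reach_trans H r0y (top_reach yt vW))).
Qed.

Lemma top_bot_disjoint W : K \subset W -> W != K -> [disjoint top S W & bot S W].
Proof.
move=> KW; apply: contraR => /pred0Pn[y /andP[yt yb]] /=.
rewrite eqEsubset KW andbT; apply/subsetP => w wW.
have x0W := subsetP KW _ block_self.
rewrite inE (reach_trans H (bot_reach yb x0W) (top_reach yt wW)).
exact: (reach_trans H (bot_reach yb wW) (top_reach yt x0W)).
Qed.

Lemma bound_top_block W : convex S W -> K \subset W -> W != K -> two_sided g W ->
  top S W = K -> ~~ two_sided g (W :\: bot S W) -> #|W| <= #|Nres S g h W| + #|K|.
Proof.
move=> cvx KW nWK tw eT ob.
have topW' : top S W \subset W by apply/subsetP => v /topW.
rewrite (card_split topW') {2}eT leq_add2r.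
exact: (peel_top_one_sided H cvx tw ob (top_bot_disjoint KW nWK)).
Qed.
End Blocks.

Section Induction.
Variables (n : nat) (S : {set ptrans n}) (g h : ptrans n) (x0 : 'I_n).
Hypothesis H : setting S g h.
Implicit Types (y : 'I_n) (W : {set 'I_n}).

Local Notation K := (tblock S x0).

Lemma bot_block W y : K \subset W -> y \in bot S W -> y \in K -> bot S W = K.
Proof.
have := top_block (x0 := x0) (setting_inv H) (W := W) (y := y).
by rewrite (top_inv H) (tblock_inv H).
Qed.

Lemma bound_bot_block W : convex S W -> K \subset W -> W != K -> two_sided g W ->
  bot S W = K -> ~~ two_sided g (W :\: top S W) -> #|W| <= #|Nres S g h W| + #|K|.
Proof.
have := bound_top_block (x0 := x0) (setting_inv H) (W := W).
by rewrite (top_inv H) (bot_inv H) (tblock_inv H) (Nres_inv H) => B /(convex_inv H).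
Qed.

Definition admissible W := (W == K) || two_sided g W.

Lemma not_admissible W : ~~ admissible W -> ~~ two_sided g W.
Proof. by rewrite negb_or => /andP[]. Qed.

(* Peel off the top (or bottom) block when it avoids K and
   what remains is admissible; when the top (bottom) block is K, conclude by
   bound_top_block (bound_bot_block); otherwise W is one-sided, a contradiction. *)
Lemma block_bound W : convex S W -> K \subset W -> admissible W ->
  #|W| <= #|Nres S g h W| + #|K|.
Proof.
have [m] := ubnP #|W|; elim: m W => // m IH W; rewrite ltnS => Wm cvx KW.
case: (eqVneq W K) => [->|nWK] tw; first by rewrite leq_addl.
move: tw; rewrite /admissible (negbTE nWK) /= => tw.
have x0W := subsetP KW _ (block_self x0 H); have dTB := top_bot_disjoint H KW nWK.
have [yt ytop] := top_exists H x0W; have [yb ybot] := bot_exists H x0W.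
have via_top : [disjoint K & top S W] -> admissible (W :\: top S W) ->
    #|W| <= #|Nres S g h W| + #|K|.
  move=> dK adm; have Tm := leq_trans (card_setD_lt (topW ytop) ytop) Wm.
  apply: (bound_peel_top H cvx tw); apply: (IH _ Tm (convex_top H cvx) _ adm).
  by rewrite subsetD KW dK.
have via_bot : [disjoint K & bot S W] -> admissible (W :\: bot S W) ->
    #|W| <= #|Nres S g h W| + #|K|.
  move=> dK adm; have Bm := leq_trans (card_setD_lt (botW ybot) ybot) Wm.
  apply: (bound_peel_bot H cvx tw); apply: (IH _ Bm (convex_bot H cvx) _ adm).
  by rewrite subsetD KW dK.
case: (boolP [disjoint K & top S W]) => dT; last first.
  have [k /andP[kK kt]] := pred0Pn dT; have eT := top_block H KW kt kK.
  have dB : [disjoint K & bot S W] by rewrite -eT.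
  have [/(via_bot dB)//|/not_admissible ob] := boolP (admissible (W :\: bot S W)).
  exact: (bound_top_block H cvx KW nWK tw eT ob).
case: (boolP [disjoint K & bot S W]) => dB; last first.
  have [k /andP[kK kb]] := pred0Pn dB; have eB := bot_block KW kb kK.
  have [/(via_top dT)//|/not_admissible ot] := boolP (admissible (W :\: top S W)).
  exact: (bound_bot_block cvx KW nWK tw eB ot).
have [/(via_top dT)//|/not_admissible ot] := boolP (admissible (W :\: top S W)).
have [/(via_bot dB)//|/not_admissible ob] := boolP (admissible (W :\: bot S W)).
(* W is covered by the one-sided sets W \ top and W \ bot, which share x0. *)
have x0T : x0 \in W :\: top S W by rewrite in_setD (disjointFr dT (block_self x0 H)) x0W.
have x0B : x0 \in W :\: bot S W by rewrite in_setD (disjointFr dB (block_self x0 H)) x0W.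
have cover : W \subset (W :\: top S W) :|: (W :\: bot S W).
  apply/subsetP => v vW; rewrite in_setU !in_setD vW !andbT -negb_and.
  by apply/negP => /andP[vt vb]; rewrite (disjointFr dTB vt) in vb.
by rewrite (negbTE (one_sided_union ot ob x0T x0B cover)) in tw.
Qed.
End Induction.

(* Lemma 3.3: apply block_bound to W = X and the block of size t. *)
Theorem lemma3p3 (n : nat) (S : {set ptrans n}) (g h : ptrans n) (t : nat) :
  2 <= n ->
  subsemigroup_In_minus_Sn S ->
  semitransitive S ->
  #|S| <= 2 * n ->
  g != h ->
  [set f in S | idempotentb f & f != pzero n] = [set g; h] ->
  (exists x : 'I_n, #|tblock S x| = t) ->
  (forall x : 'I_n, t <= #|tblock S x|) ->
  n - t <= #|(sandwich S g h :|: sandwich S h g) :\ pzero n|.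
Proof.
move=> _ HS Hst _ _ Hidem [x0 <-] _.
have H := setting_of_hyps HS Hst Hidem.
have two : two_sided g [set: 'I_n].
  have [_ _ /ptrans_nz[a ga]] := g_props Hidem.
  have [_ _ /ptrans_nz[b hb]] := h_props Hidem.
  apply/andP; split; apply/existsP; [exists a | exists b]; rewrite in_setT //=.
  by rewrite /side (gh_dom H) negbK.
have cvx : convex S [set: 'I_n] by move=> a b c _ _ _ _; rewrite in_setT.
have := block_bound (x0 := x0) H cvx (subsetT _) (introT orP (or_intror two)).
have -> : Nres S g h [set: 'I_n] = (sandwich S g h :|: sandwich S h g) :\ pzero n.
  by rewrite /Nres (eq_imset _ (@restrictT n)) imset_id.
by rewrite cardsT card_ord leq_subLR addnC.
Qed.
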